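(* Let $T>0$, let $\pi:[0,T]\to\mathbb R$ be continuous and piecewise $C^1$ with $\pi(0)=0$, and let $\eta(t)=(t,\pi(t))$. Then there exists $n\in\mathbb N$ such that $\mathcal P_{\alpha_n}\cdots\mathcal P_{\alpha_1}\mathcal P_{\alpha_0}\eta(t)\in\bar C_{\mathrm{aff}}$ for all $t\in[0,T]$.
   Context: $\alpha_0=(0,-2)$, $\alpha_1=(0,2)$, $\tilde\alpha_0(t,x)=t-x$, $\tilde\alpha_1(t,x)=x$; for $k\in\mathbb N$ indices are taken modulo 2. For continuous $\eta:[0,T]\to\mathbb R^2$ with $\eta(0)=0$, $\mathcal P_{\alpha_i}\eta(t)=\eta(t)-\inf_{0\le s\le t}\tilde\alpha_i(\eta(s))\alpha_i$. $\bar C_{\mathrm{aff}}=\{(t,x)\in\mathbb R^2:0\le x\le t\}$. *)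

From Stdlib Require Import Reals Lra ClassicalEpsilon.
Open Scope R_scope.

(* A path in R^2 (only its values on [0,T] matter). *)
Definition path := R -> R * R.

Definition alpha (k : nat) : R * R :=
  if Nat.even k then (0, -2) else (0, 2).

Definition alpha_t (k : nat) (p : R * R) : R :=
  if Nat.even k then fst p - snd p else snd p.

Definition is_inf_upto (g : R -> R) (t m : R) : Prop :=
  (forall s, 0 <= s <= t -> m <= g s) /\
  (forall m', (forall s, 0 <= s <= t -> m' <= g s) -> m' <= m).

(* inf_{0 <= s <= t} g s (chosen classically; exists whenever g is continuous). *)
Definition inf_upto (g : R -> R) (t : R) : R :=
  epsilon (inhabits 0) (fun m => is_inf_upto g t m).

Definition P_alpha (k : nat) (eta : path) : path :=
  fun t =>
    let m := inf_upto (fun s => alpha_t k (eta s)) t in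
    (fst (eta t) - m * fst (alpha k), snd (eta t) - m * snd (alpha k)).

(* iterP n eta = P_{alpha_n} ... P_{alpha_1} P_{alpha_0} eta *)
Fixpoint iterP (n : nat) (eta : path) : path :=
  match n with
  | O => P_alpha 0 eta
  | S n' => P_alpha (S n') (iterP n' eta)
  end.

Definition C_aff (p : R * R) : Prop := 0 <= snd p <= fst p.

Definition continuous_on_Icc (f : R -> R) (a b : R) : Prop :=
  forall x, a <= x <= b ->
    forall eps, eps > 0 -> exists delta, delta > 0 /\
      forall y, a <= y <= b -> Rabs (y - x) < delta -> Rabs (f y - f x) < eps.

(* f is C^1 on [a,b]: differentiable on (a,b) with derivative extending to a
   continuous function on [a,b] (equivalently, on R). *)
Definition C1_on_Icc (f : R -> R) (a b : R) : Prop :=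
  exists g : R -> R, continuity g /\
    forall x, a < x < b -> derivable_pt_lim f x (g x).

Definition piecewise_C1 (f : R -> R) (a b : R) : Prop :=
  exists (k : nat) (p : nat -> R),
    p 0%nat = a /\ p k = b /\
    (forall i, (i < k)%nat -> p i < p (S i)) /\
    (forall i, (i < k)%nat -> C1_on_Icc f (p i) (p (S i))).

From Stdlib Require Import Reals Lra Lia ClassicalEpsilon FunctionalExtensionality.
Open Scope R_scope.

(* Write the k-th iterate as t |-> (t, X_k t).  Each projection acts on X_k
   by the Pitman transform y |-> y - 2 inf y, applied to X_k itself (odd k) or
   to its mirror t - X_k (even k).  These steps keep the Lipschitz constant L
   of pi, and they leave X_k untouched on any [0, sigma] where it already lies
   in the cone 0 <= x <= t.  Near 0, pi t = v t + o(t) with v its right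
   derivative, and the slopes of the iterates follow v |-> 1 - |1 - v| |-> |.|,
   which land in the cone after finitely many steps; so some X_k lies in the
   cone on an interval [0, sigma0].  Two further steps extend any such interval
   [0, sigma] to [0, sigma + sigma / (7 L)], hence finitely many reach T. *)

Lemma Rabs_le_inv (a b : R) : Rabs a <= b -> - b <= a <= b.
Proof. unfold Rabs; destruct (Rcase_abs a); intros; lra. Qed.

Lemma even_succ_negb (k : nat) : Nat.even (S k) = negb (Nat.even k).
Proof. rewrite Nat.even_succ; reflexivity. Qed.

Lemma is_inf_upto_exists (g : R -> R) (t lb : R) :
  0 <= t -> (forall s, 0 <= s <= t -> lb <= g s) -> exists m, is_inf_upto g t m.
Proof.
  intros Ht Hlb.
  set (E := fun r => exists s, 0 <= s <= t /\ r = - g s).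
  assert (HE : bound E).
  { exists (- lb). intros r [s [Hs ->]]. specialize (Hlb s Hs). lra. }
  assert (HE0 : exists r, E r) by (exists (- g 0), 0; split; [lra | reflexivity]).
  destruct (completeness E HE HE0) as [M [HM_ub HM_lub]].
  exists (- M). split.
  - intros s Hs. assert (E (- g s)) as HEs by (exists s; auto).
    specialize (HM_ub _ HEs). lra.
  - intros m' Hm'. enough (M <= - m') by lra.
    apply HM_lub. intros r [s [Hs ->]]. specialize (Hm' s Hs). lra.
Qed.

Lemma inf_upto_spec (g : R -> R) (t lb : R) :
  0 <= t -> (forall s, 0 <= s <= t -> lb <= g s) -> is_inf_upto g t (inf_upto g t).
Proof.
  intros Ht Hlb. unfold inf_upto. apply epsilon_spec. exact (is_inf_upto_exists g t lb Ht Hlb).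
Qed.

Definition mirror (y : R -> R) : R -> R := fun t => t - y t.

Definition pitman (y : R -> R) : R -> R := fun t => y t - 2 * inf_upto y t.

Definition slope_bounded (y : R -> R) (T a b : R) : Prop :=
  forall s t, 0 <= s -> s <= t -> t <= T -> - a * (t - s) <= y t - y s <= b * (t - s).

Definition cone_upto (x : R -> R) (sigma : R) : Prop :=
  forall t, 0 <= t <= sigma -> 0 <= x t <= t.

Lemma cone_upto_le (x : R -> R) (sigma sigma' : R) :
  sigma' <= sigma -> cone_upto x sigma -> cone_upto x sigma'.
Proof. intros Hle Hx t Ht. apply Hx. lra. Qed.

Lemma mirror_at_0 (y : R -> R) : y 0 = 0 -> mirror y 0 = 0.
Proof. intros Hy0. unfold mirror. lra. Qed.

Lemma mirror_slope_bounded (y : R -> R) (T a b : R) :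
  slope_bounded y T a b -> slope_bounded (mirror y) T (b - 1) (a + 1).
Proof.
  intros Hy s t Hs Hst HtT. specialize (Hy s t Hs Hst HtT). unfold mirror. lra.
Qed.

Lemma pitman_eq_on_nonneg (y : R -> R) (t : R) :
  0 <= t -> y 0 = 0 -> (forall s, 0 <= s <= t -> 0 <= y s) -> pitman y t = y t.
Proof.
  intros Ht Hy0 Hpos.
  destruct (inf_upto_spec y t 0 Ht Hpos) as [Hlow Hglb].
  assert (0 <= inf_upto y t) by (apply Hglb; exact Hpos).
  assert (inf_upto y t <= 0) by (rewrite <- Hy0; apply Hlow; lra).
  unfold pitman. lra.
Qed.

Lemma pitman_at_0 (y : R -> R) : y 0 = 0 -> pitman y 0 = 0.
Proof.
  intros Hy0. rewrite (pitman_eq_on_nonneg y 0); [exact Hy0 | lra | exact Hy0 |].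
  intros s Hs. replace s with 0 by lra. lra.
Qed.

Lemma pitman_linear_approx (y : R -> R) (u e d t : R) :
  0 <= e -> (forall s, 0 <= s <= d -> Rabs (y s - u * s) <= e * s) -> 0 <= t <= d ->
  Rabs (pitman y t - Rabs u * t) <= 3 * e * t.
Proof.
  intros He Happrox Ht.
  assert (Hy : forall s, 0 <= s <= t -> u * s - e * s <= y s <= u * s + e * s).
  { intros s Hs. pose proof (Rabs_le_inv _ _ (Happrox s ltac:(lra))). lra. }
  destruct (inf_upto_spec y t (- (Rabs u + e) * t) (proj1 Ht)) as [Hlow Hglb].
  { intros s Hs. specialize (Hy s Hs).
    assert (0 <= (Rabs u + e) * (t - s)).
    { apply Rmult_le_pos; [pose proof (Rabs_pos u) |]; lra. }
    assert (0 <= (Rabs u + u) * s).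
    { apply Rmult_le_pos; [pose proof (Rle_abs (- u)); rewrite Rabs_Ropp in *|]; lra. }
    lra. }
  unfold pitman. set (m := inf_upto y t) in *.
  destruct (Hy t ltac:(lra)) as [Hyt_lo Hyt_hi].
  destruct (Rle_dec 0 u) as [Hu | Hu].
  - rewrite (Rabs_right u) by lra.
    assert (- (e * t) <= m).
    { apply Hglb. intros s Hs. specialize (Hy s Hs).
      assert (e * s <= e * t) by (apply Rmult_le_compat_l; lra).
      assert (0 <= u * s) by (apply Rmult_le_pos; lra). lra. }
    assert (m <= 0) by (specialize (Hy 0 ltac:(lra)); specialize (Hlow 0 ltac:(lra)); lra).
    apply Rabs_le. lra.
  - rewrite (Rabs_left u) by lra.
    assert ((u - e) * t <= m).
    { apply Hglb. intros s Hs. specialize (Hy s Hs).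
      assert ((u - e) * t <= (u - e) * s) by (apply Rmult_le_compat_neg_l; lra). lra. }
    assert (m <= y t) by (apply Hlow; lra).
    apply Rabs_le. lra.
Qed.

Section PitmanSlope.

Variables (y : R -> R) (T a b : R).
Hypotheses (Ha : 0 <= a) (Hy : slope_bounded y T a b) (Hy0 : y 0 = 0).

Lemma slope_bounded_inf_spec (t : R) : 0 <= t <= T -> is_inf_upto y t (inf_upto y t).
Proof.
  intros Ht. apply (inf_upto_spec _ _ (- a * t)); [lra |].
  intros s Hs. destruct (Hy 0 s) as [Hlo _]; try lra.
  assert (a * s <= a * t) by (apply Rmult_le_compat_l; lra). lra.
Qed.

Lemma pitman_nonneg (t : R) : 0 <= t <= T -> 0 <= pitman y t.
Proof.
  intros Ht. destruct (slope_bounded_inf_spec t Ht) as [Hlow _].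
  pose proof (Hlow 0 ltac:(lra)). pose proof (Hlow t ltac:(lra)).
  unfold pitman. lra.
Qed.

Lemma pitman_slope_bounded : a <= b -> slope_bounded (pitman y) T a b.
Proof.
  intros Hab s t Hs Hst HtT.
  destruct (slope_bounded_inf_spec s ltac:(lra)) as [Hlow_s Hglb_s].
  destruct (slope_bounded_inf_spec t ltac:(lra)) as [Hlow_t Hglb_t].
  set (ms := inf_upto y s) in *. set (mt := inf_upto y t) in *.
  assert (mt <= ms) by (apply Hglb_s; intros u Hu; apply Hlow_t; lra).
  destruct (Hy s t Hs Hst HtT) as [Hlo Hhi].
  (* for [u > s], average the slope bounds from [s] and from [t] *)
  assert ((y t - y s + 2 * ms - b * (t - s)) / 2 <= mt).
  { apply Hglb_t. intros u Hu. destruct (Rle_dec u s).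
    - specialize (Hlow_s u ltac:(lra)). lra.
    - destruct (Hy u t) as [_ Hut]; try lra. destruct (Hy s u) as [Hsu _]; try lra.
      specialize (Hlow_s s ltac:(lra)).
      assert (a * (u - s) <= b * (u - s)) by (apply Rmult_le_compat_r; lra).
      assert (b * (t - s) = b * (t - u) + b * (u - s)) by ring. lra. }
  unfold pitman. fold ms mt. lra.
Qed.

End PitmanSlope.

Definition admissible (T L : R) (x : R -> R) : Prop := x 0 = 0 /\ slope_bounded x T L L.

Definition step (k : nat) (x : R -> R) : R -> R :=
  if Nat.even k then mirror (pitman (mirror x)) else pitman x.

Fixpoint height (pi : R -> R) (k : nat) : R -> R :=
  match k with
  | O => pi
  | S j => step j (height pi j)
  end.

Lemma P_alpha_graph (k : nat) (x : R -> R) :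
  P_alpha k (fun s => (s, x s)) = fun t => (t, step k x t).
Proof.
  apply functional_extensionality. intros t.
  unfold P_alpha, alpha, alpha_t, step, pitman, mirror.
  destruct (Nat.even k); simpl; f_equal; try change (fun s => x s) with x; ring.
Qed.

Lemma iterP_graph (pi : R -> R) (n : nat) :
  iterP n (fun s => (s, pi s)) = fun t => (t, height pi (S n) t).
Proof.
  induction n as [| n IH].
  - apply P_alpha_graph.
  - simpl iterP. rewrite IH. apply P_alpha_graph.
Qed.

Lemma step_eq_on_cone (k : nat) (x : R -> R) (sigma : R) :
  cone_upto x sigma -> forall t, 0 <= t <= sigma -> step k x t = x t.
Proof.
  intros Hx t Ht. assert (Hx0 : x 0 = 0) by (specialize (Hx 0 ltac:(lra)); lra).
  unfold step. destruct (Nat.even k).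
  - unfold mirror at 1. rewrite (pitman_eq_on_nonneg (mirror x)).
    + unfold mirror. ring.
    + lra.
    + exact (mirror_at_0 x Hx0).
    + intros s Hs. specialize (Hx s ltac:(lra)). unfold mirror. lra.
  - apply pitman_eq_on_nonneg; [lra | exact Hx0 |].
    intros s Hs. specialize (Hx s ltac:(lra)). lra.
Qed.

Lemma cone_upto_step (k : nat) (x : R -> R) (sigma : R) :
  cone_upto x sigma -> cone_upto (step k x) sigma.
Proof.
  intros Hx t Ht. rewrite (step_eq_on_cone k x sigma Hx t Ht). exact (Hx t Ht).
Qed.

Section Steps.

Variables (T L : R).
Hypothesis HL : 1 <= L.

Lemma admissible_mirror_slope (x : R -> R) :
  admissible T L x -> slope_bounded (mirror x) T (L - 1) (L + 1).
Proof.
  intros [_ Hx]. exact (mirror_slope_bounded _ _ _ _ Hx).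
Qed.

Lemma admissible_step (k : nat) (x : R -> R) :
  admissible T L x -> admissible T L (step k x).
Proof.
  intros Hadm. pose proof Hadm as [Hx0 Hx]. unfold step. destruct (Nat.even k).
  - pose proof (mirror_at_0 x Hx0) as Hm0.
    pose proof (pitman_slope_bounded (mirror x) T (L - 1) (L + 1) ltac:(lra)
                  (admissible_mirror_slope x Hadm) Hm0 ltac:(lra)) as Hp.
    split.
    + exact (mirror_at_0 _ (pitman_at_0 _ Hm0)).
    + pose proof (mirror_slope_bounded _ _ _ _ Hp) as H.
      replace (L + 1 - 1) with L in H by ring. replace (L - 1 + 1) with L in H by ring.
      exact H.
  - split.
    + exact (pitman_at_0 x Hx0).
    + exact (pitman_slope_bounded x T L L ltac:(lra) Hx Hx0 (Rle_refl L)).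
Qed.

Lemma step_one_sided (k : nat) (x : R -> R) (t : R) :
  admissible T L x -> 0 <= t <= T ->
  if Nat.even k then step k x t <= t else 0 <= step k x t.
Proof.
  intros Hadm Ht. pose proof Hadm as [Hx0 Hx]. unfold step. destruct (Nat.even k).
  - pose proof (mirror_at_0 x Hx0) as Hm0.
    pose proof (pitman_nonneg (mirror x) T (L - 1) (L + 1) ltac:(lra)
                  (admissible_mirror_slope x Hadm) Hm0 t Ht).
    unfold mirror at 1. lra.
  - exact (pitman_nonneg x T L L ltac:(lra) Hx Hx0 t Ht).
Qed.

Lemma pitman_after_cone (x : R -> R) (sigma h u : R) :
  admissible T L x -> cone_upto x sigma -> 0 <= sigma -> 0 <= h -> sigma + h <= T ->
  sigma <= u <= sigma + h -> x u <= pitman x u <= x sigma + 3 * L * h.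
Proof.
  intros [Hx0 Hx] Hc Hs Hh HT Hu.
  destruct (slope_bounded_inf_spec x T L L ltac:(lra) Hx Hx0 u ltac:(lra)) as [Hlow Hglb].
  assert (HLh : forall r, 0 <= r <= h -> L * r <= L * h)
    by (intros r Hr; apply Rmult_le_compat_l; lra).
  assert (inf_upto x u <= 0) by (rewrite <- Hx0; apply Hlow; lra).
  assert (- (L * h) <= inf_upto x u).
  { apply Hglb. intros s Hs'. destruct (Rle_dec s sigma).
    - specialize (Hc s ltac:(lra)). specialize (HLh 0 ltac:(lra)). lra.
    - destruct (Hx sigma s) as [Hlo _]; try lra. specialize (Hc sigma ltac:(lra)).
      specialize (HLh (s - sigma) ltac:(lra)). lra. }
  destruct (Hx sigma u) as [_ Hhi]; try lra. specialize (HLh (u - sigma) ltac:(lra)).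
  unfold pitman. lra.
Qed.

(* With [h <= sigma / (7 L)], a Pitman step followed by a mirrored one pushes
   the cone property from [0, sigma] to [0, sigma + h]: past [sigma] the first
   step cannot lift [x] above [x sigma + 3 L h], so the second step either does
   nothing or lifts it by at least [sigma - x sigma - 3 L h]. *)
Lemma cone_upto_extend (x : R -> R) (sigma h : R) :
  admissible T L x -> cone_upto x sigma -> 0 < sigma -> 0 <= h ->
  7 * L * h <= sigma -> sigma + h <= T ->
  cone_upto (mirror (pitman (mirror (pitman x)))) (sigma + h).
Proof.
  intros Hadm Hc Hs Hh H7 HT t Ht.
  pose proof Hadm as [Hx0 Hx].
  set (x1 := pitman x).
  assert (Hc1 : cone_upto x1 sigma) by exact (cone_upto_step 1 x sigma Hc).
  destruct (Rle_dec t sigma) as [Hts | Hts].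
  { exact (cone_upto_step 2 x1 sigma Hc1 t ltac:(lra)). }
  assert (Hx1 : forall u, sigma <= u <= sigma + h -> x u <= x1 u <= x sigma + 3 * L * h)
    by (intros u Hu; exact (pitman_after_cone x sigma h u Hadm Hc ltac:(lra) Hh HT Hu)).
  set (c := Rmin 0 (sigma - x sigma - 3 * L * h)).
  assert (Hc_0 : c <= 0) by apply Rmin_l.
  assert (Hc_sigma : c <= sigma - x sigma - 3 * L * h) by apply Rmin_r.
  assert (Hlow : forall s, 0 <= s <= t -> c <= mirror x1 s).
  { intros s Hs'. unfold mirror. destruct (Rle_dec s sigma).
    - specialize (Hc1 s ltac:(lra)). lra.
    - specialize (Hx1 s ltac:(lra)). lra. }
  destruct (inf_upto_spec (mirror x1) t c ltac:(lra) Hlow) as [Hlow2 Hglb2].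
  set (m2 := inf_upto (mirror x1) t) in *.
  assert (Hm2_c : c <= m2) by (apply Hglb2; exact Hlow).
  assert (Hm2_0 : m2 <= 0).
  { specialize (Hlow2 0 ltac:(lra)). specialize (Hc1 0 ltac:(lra)). unfold mirror in Hlow2. lra. }
  assert (Hm2_t : m2 <= t - x1 t) by exact (Hlow2 t ltac:(lra)).
  assert (Hx1t : 0 <= x1 t) by exact (pitman_nonneg x T L L ltac:(lra) Hx Hx0 t ltac:(lra)).
  specialize (Hc sigma ltac:(lra)). specialize (Hx1 t ltac:(lra)).
  destruct (Hx sigma t) as [Hlo _]; try lra.
  assert (HLh : L * (t - sigma) <= L * h) by (apply Rmult_le_compat_l; lra).
  assert (Hcases : c = 0 \/ c = sigma - x sigma - 3 * L * h)
    by (unfold c, Rmin; destruct (Rle_dec _ _); auto).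
  change (0 <= t - ((t - x1 t) - 2 * m2) <= t).
  destruct Hcases as [E | E]; rewrite E in *; lra.
Qed.

End Steps.


(* The slope of [height pi k] at [0+] when [pi t = v t + o(t)]. *)
Fixpoint slope_seq (v : R) (k : nat) : R :=
  match k with
  | O => v
  | S j => if Nat.even j then 1 - Rabs (1 - slope_seq v j) else Rabs (slope_seq v j)
  end.

Lemma height_linear_approx (pi : R -> R) (v eps d : R) :
  0 <= eps -> (forall s, 0 <= s <= d -> Rabs (pi s - v * s) <= eps * s) ->
  forall k t, 0 <= t <= d -> Rabs (height pi k t - slope_seq v k * t) <= 3 ^ k * eps * t.
Proof.
  intros Heps Hpi k. induction k as [| k IH]; intros t Ht.
  - simpl. rewrite Rmult_1_l. exact (Hpi t Ht).
  - assert (He : 0 <= 3 ^ k * eps) by (apply Rmult_le_pos; [apply pow_le |]; lra).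
    change (Rabs (step k (height pi k) t - slope_seq v (S k) * t) <= 3 * 3 ^ k * eps * t).
    cbn [slope_seq]. unfold step. destruct (Nat.even k).
    + assert (Hm : forall s, 0 <= s <= d ->
                Rabs (mirror (height pi k) s - (1 - slope_seq v k) * s) <= 3 ^ k * eps * s).
      { intros s Hs. unfold mirror.
        replace (s - height pi k s - (1 - slope_seq v k) * s)
          with (- (height pi k s - slope_seq v k * s)) by ring.
        rewrite Rabs_Ropp. exact (IH s Hs). }
      pose proof (pitman_linear_approx _ _ _ d t He Hm Ht) as A.
      unfold mirror at 1.
      replace (t - pitman (mirror (height pi k)) t - (1 - Rabs (1 - slope_seq v k)) * t)
        with (- (pitman (mirror (height pi k)) t - Rabs (1 - slope_seq v k) * t)) by ring.
      rewrite Rabs_Ropp. lra.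
    + pose proof (pitman_linear_approx _ _ _ d t He IH Ht). lra.
Qed.

(* For even [k]: if [slope_seq v (S k) <= 0] and [slope_seq v (S (S k)) >= 1],
   then [slope_seq v (S (S (S k))) = slope_seq v (S k) + 2]. *)
Lemma slope_seq_eventually_in_cone (v : R) :
  exists k, if Nat.even k then 0 < slope_seq v (S k) else slope_seq v (S k) < 1.
Proof.
  assert (Hind : forall n k, Nat.even k = true -> - 2 * INR n < slope_seq v (S k) ->
            exists k', if Nat.even k' then 0 < slope_seq v (S k') else slope_seq v (S k') < 1).
  { induction n as [| n IH]; intros k Ek Hk.
    - exists k. rewrite Ek. simpl INR in Hk. lra.
    - destruct (Rlt_dec 0 (slope_seq v (S k))) as [Hpos | Hpos].
      { exists k. rewrite Ek. exact Hpos. }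
      assert (Ek1 : Nat.even (S k) = false) by (rewrite even_succ_negb, Ek; reflexivity).
      assert (E1 : slope_seq v (S (S k)) = - slope_seq v (S k)).
      { cbn [slope_seq]. rewrite Ek1. apply Rabs_left1. cbn [slope_seq] in Hpos. lra. }
      destruct (Rlt_dec (slope_seq v (S (S k))) 1) as [Hlt1 | Hlt1].
      { exists (S k). rewrite Ek1. exact Hlt1. }
      apply (IH (S (S k)) Ek).
      assert (E2 : slope_seq v (S (S (S k))) = 1 - Rabs (1 - slope_seq v (S (S k))))
        by (cbn [slope_seq Nat.even]; rewrite Ek; reflexivity).
      rewrite E2, Rabs_left1, E1 by lra. rewrite S_INR in Hk. lra. }
  destruct (INR_archimed 2 (- slope_seq v 1) ltac:(lra)) as [n Hn].
  apply (Hind n 0%nat eq_refl). lra.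
Qed.

Section Iteration.

Variables (pi : R -> R) (T L : R).
Hypotheses (HL : 1 <= L) (Hpi : admissible T L pi).

Lemma admissible_height (k : nat) : admissible T L (height pi k).
Proof.
  induction k as [| k IH]; [exact Hpi |]. exact (admissible_step T L HL k _ IH).
Qed.

Lemma cone_upto_height_extend (k : nat) (sigma h : R) :
  0 < sigma -> 0 <= h -> 7 * L * h <= sigma -> sigma + h <= T ->
  cone_upto (height pi k) sigma -> exists k', cone_upto (height pi k') (sigma + h).
Proof.
  intros Hs Hh H7 HT Hc.
  assert (Hodd : exists j, Nat.even j = false /\ cone_upto (height pi j) sigma).
  { destruct (Nat.even k) eqn:Ek.
    - exists (S k). rewrite even_succ_negb, Ek. split; [reflexivity |].
      exact (cone_upto_step k _ sigma Hc).
    - exists k. auto. }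
  destruct Hodd as [j [Ej Hcj]]. exists (S (S j)).
  change (cone_upto (step (S j) (step j (height pi j))) (sigma + h)).
  unfold step at 1 2. rewrite even_succ_negb, Ej. simpl negb.
  exact (cone_upto_extend T L HL _ sigma h (admissible_height j) Hcj Hs Hh H7 HT).
Qed.

Lemma cone_upto_height_T (k0 : nat) (sigma0 : R) :
  0 < sigma0 <= T -> cone_upto (height pi k0) sigma0 -> exists k, cone_upto (height pi k) T.
Proof.
  intros Hs0 Hc0.
  set (delta := sigma0 / (7 * L)).
  assert (Hdelta : 0 < delta) by (unfold delta; apply Rdiv_lt_0_compat; lra).
  assert (H7 : 7 * L * delta = sigma0) by (unfold delta; field; lra).
  assert (Hn : forall n, exists k, cone_upto (height pi k) (Rmin T (sigma0 + INR n * delta))).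
  { induction n as [| n [k Hk]].
    - exists k0. simpl INR. rewrite Rmult_0_l, Rplus_0_r, Rmin_right by lra. exact Hc0.
    - rewrite S_INR.
      destruct (Rle_dec T (sigma0 + INR n * delta)) as [Hle | Hlt].
      + exists k. rewrite Rmin_left in Hk by lra. rewrite Rmin_left by lra. exact Hk.
      + rewrite Rmin_right in Hk by lra.
        set (sigma := sigma0 + INR n * delta) in *.
        assert (Hsigma : sigma0 <= sigma).
        { pose proof (Rmult_le_pos _ _ (pos_INR n) (Rlt_le _ _ Hdelta)). unfold sigma. lra. }
        set (h := Rmin delta (T - sigma)).
        assert (Hh_delta : h <= delta) by apply Rmin_l.
        assert (Hh_T : h <= T - sigma) by apply Rmin_r.
        assert (Hh : h = delta \/ h = T - sigma)
          by (unfold h, Rmin; destruct (Rle_dec delta (T - sigma)); auto).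
        assert (H7h : 7 * L * h <= sigma).
        { assert (7 * L * h <= 7 * L * delta) by (apply Rmult_le_compat_l; lra). lra. }
        destruct (cone_upto_height_extend k sigma h ltac:(lra) ltac:(lra) H7h ltac:(lra) Hk)
          as [k' Hk'].
        exists k'. apply (cone_upto_le _ (sigma + h)); [| exact Hk'].
        replace (sigma0 + (INR n + 1) * delta) with (sigma + delta) by (unfold sigma; ring).
        pose proof (Rmin_l T (sigma + delta)). pose proof (Rmin_r T (sigma + delta)).
        destruct Hh as [-> | ->]; lra. }
  destruct (INR_archimed delta T Hdelta) as [n Hn_large].
  destruct (Hn n) as [k Hk]. exists k.
  rewrite Rmin_left in Hk by lra. exact Hk.
Qed.

Lemma cone_upto_near_0 (v : R) :
  0 < T ->
  (forall eps, 0 < eps -> exists d, 0 < d /\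
     forall s, 0 <= s <= d -> Rabs (pi s - v * s) <= eps * s) ->
  exists k sigma, 0 < sigma <= T /\ cone_upto (height pi k) sigma.
Proof.
  intros HT Hv.
  destruct (slope_seq_eventually_in_cone v) as [k Hk].
  set (w := slope_seq v (S k)) in Hk.
  set (e0 := if Nat.even k then w else 1 - w).
  assert (He0 : 0 < e0) by (unfold e0; destruct (Nat.even k); lra).
  assert (Hpow : 0 < 3 ^ S k) by (apply pow_lt; lra).
  assert (Heps : 0 < e0 / 3 ^ S k) by (apply Rdiv_lt_0_compat; lra).
  destruct (Hv _ Heps) as [d [Hd Happrox]].
  exists (S k), (Rmin d T).
  assert (Hmin_d : Rmin d T <= d) by apply Rmin_l.
  assert (Hmin_T : Rmin d T <= T) by apply Rmin_r.
  split; [split; [apply Rmin_glb_lt |]; lra |]. intros t Ht.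
  pose proof (height_linear_approx pi v _ (Rmin d T) (Rlt_le _ _ Heps)
                ltac:(intros s Hs; apply Happrox; lra) (S k) t Ht) as A.
  replace (3 ^ S k * (e0 / 3 ^ S k)) with e0 in A by (field; lra).
  apply Rabs_le_inv in A. fold w in A.
  pose proof (step_one_sided T L HL k (height pi k) t (admissible_height k)
                ltac:(lra)) as B.
  change (step k (height pi k) t) with (height pi (S k) t) in B.
  unfold e0 in A. destruct (Nat.even k); lra.
Qed.

End Iteration.

Definition lipschitz_on (f : R -> R) (a b K : R) : Prop :=
  forall s t, a <= s -> s <= t -> t <= b -> Rabs (f t - f s) <= K * (t - s).

Lemma lipschitz_on_mono (f : R -> R) (a b K K' : R) :
  K <= K' -> lipschitz_on f a b K -> lipschitz_on f a b K'.
Proof.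
  intros HK Hf s t Hs Hst Ht. specialize (Hf s t Hs Hst Ht).
  assert (K * (t - s) <= K' * (t - s)) by (apply Rmult_le_compat_r; lra). lra.
Qed.

Lemma lipschitz_on_concat (f : R -> R) (a b c K : R) :
  lipschitz_on f a b K -> lipschitz_on f b c K -> lipschitz_on f a c K.
Proof.
  intros Hab Hbc s t Hs Hst Ht.
  destruct (Rle_dec t b); [apply Hab; lra |].
  destruct (Rle_dec b s); [apply Hbc; lra |].
  pose proof (Hab s b Hs ltac:(lra) ltac:(lra)). pose proof (Hbc b t ltac:(lra) ltac:(lra) Ht).
  replace (f t - f s) with ((f t - f b) + (f b - f s)) by ring.
  eapply Rle_trans; [apply Rabs_triang | lra].
Qed.

Lemma lipschitz_on_slope_bounded (f : R -> R) (T L : R) :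
  lipschitz_on f 0 T L -> slope_bounded f T L L.
Proof.
  intros Hf s t Hs Hst Ht. pose proof (Rabs_le_inv _ _ (Hf s t Hs Hst Ht)). lra.
Qed.

Lemma continuous_on_Icc_subinterval (f : R -> R) (a b c d : R) :
  a <= c -> d <= b -> continuous_on_Icc f a b -> continuous_on_Icc f c d.
Proof.
  intros Hac Hdb Hf x Hx eps Heps. destruct (Hf x ltac:(lra) eps Heps) as [delta [Hd Hy]].
  exists delta. split; [exact Hd |]. intros y Hy'. apply Hy. lra.
Qed.

Lemma continuous_on_Icc_sub_linear (f : R -> R) (a b w : R) :
  continuous_on_Icc f a b -> continuous_on_Icc (fun x => f x - w * x) a b.
Proof.
  intros Hf x Hx eps Heps.
  destruct (Hf x Hx (eps / 2) ltac:(lra)) as [d [Hd Hfd]].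
  assert (Hw : 0 < Rabs w + 1) by (pose proof (Rabs_pos w); lra).
  exists (Rmin d (eps / (2 * (Rabs w + 1)))). split.
  { apply Rmin_glb_lt; [lra |]. apply Rdiv_lt_0_compat; lra. }
  intros y Hy Hyx.
  pose proof (Rmin_l d (eps / (2 * (Rabs w + 1)))).
  pose proof (Rmin_r d (eps / (2 * (Rabs w + 1)))).
  pose proof (Hfd y Hy ltac:(lra)).
  replace (f y - w * y - (f x - w * x)) with ((f y - f x) + - (w * (y - x))) by ring.
  eapply Rle_lt_trans; [apply Rabs_triang |]. rewrite Rabs_Ropp, Rabs_mult.
  assert (Rabs w * Rabs (y - x) <= (Rabs w + 1) * (eps / (2 * (Rabs w + 1)))).
  { apply Rmult_le_compat; try apply Rabs_pos; lra. }
  replace ((Rabs w + 1) * (eps / (2 * (Rabs w + 1)))) with (eps / 2) in * by (field; lra).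
  lra.
Qed.

Lemma lipschitz_on_closure (F : R -> R) (a b K : R) :
  0 <= K -> continuous_on_Icc F a b ->
  (forall s t, a < s -> s < t -> t < b -> Rabs (F t - F s) <= K * (t - s)) ->
  lipschitz_on F a b K.
Proof.
  intros HK Hc Hint s t Hs Hst Ht.
  destruct (Req_dec s t) as [-> | Hne].
  { unfold Rminus. rewrite !Rplus_opp_r, Rabs_R0. lra. }
  assert (Heps : forall eps, 0 < eps -> Rabs (F t - F s) <= K * (t - s) + 2 * eps).
  { intros eps Heps.
    destruct (Hc s ltac:(lra) eps Heps) as [ds [Hds Hcs]].
    destruct (Hc t ltac:(lra) eps Heps) as [dt [Hdt Hct]].
    set (r := Rmin (Rmin ds dt) ((t - s) / 2) / 2).
    pose proof (Rmin_l (Rmin ds dt) ((t - s) / 2)). pose proof (Rmin_r (Rmin ds dt) ((t - s) / 2)).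
    pose proof (Rmin_l ds dt). pose proof (Rmin_r ds dt).
    assert (Hr : 0 < r) by (unfold r; repeat apply Rmin_glb_lt || apply Rdiv_lt_0_compat; lra).
    pose proof (Hcs (s + r) ltac:(unfold r in *; lra)
                  ltac:(rewrite Rabs_right; unfold r in *; lra)) as A1.
    pose proof (Hct (t - r) ltac:(unfold r in *; lra)
                  ltac:(rewrite Rabs_left; unfold r in *; lra)) as A2.
    pose proof (Hint (s + r) (t - r) ltac:(lra) ltac:(unfold r in *; lra) ltac:(lra)) as A3.
    assert (K * (t - r - (s + r)) <= K * (t - s)) by (apply Rmult_le_compat_l; lra).
    apply Rlt_le, Rabs_le_inv in A1. apply Rlt_le, Rabs_le_inv in A2. apply Rabs_le_inv in A3.
    apply Rabs_le. lra. }
  destruct (Rle_dec (Rabs (F t - F s)) (K * (t - s))) as [Hle | Hgt]; [exact Hle |].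
  specialize (Heps ((Rabs (F t - F s) - K * (t - s)) / 4) ltac:(lra)). lra.
Qed.

Lemma derivative_bound_lipschitz (f g : R -> R) (a b w K : R) :
  0 <= K -> continuous_on_Icc f a b ->
  (forall x, a < x < b -> derivable_pt_lim f x (g x)) ->
  (forall x, a < x < b -> Rabs (g x - w) <= K) ->
  lipschitz_on (fun x => f x - w * x) a b K.
Proof.
  intros HK Hc Hd Hg. apply lipschitz_on_closure; [exact HK | now apply continuous_on_Icc_sub_linear |].
  intros s t Hs Hst Ht.
  destruct (MVT_cor2 f g s t Hst (fun c Hc' => Hd c ltac:(lra))) as [c [Hmvt Hc']].
  replace (f t - w * t - (f s - w * s)) with ((g c - w) * (t - s)) by lra.
  rewrite Rabs_mult, (Rabs_right (t - s)) by lra.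
  apply Rmult_le_compat_r; [lra |]. apply Hg. lra.
Qed.

Lemma C1_on_Icc_lipschitz (f : R -> R) (a b : R) :
  a < b -> continuous_on_Icc f a b -> C1_on_Icc f a b ->
  exists K, 0 <= K /\ lipschitz_on f a b K.
Proof.
  intros Hab Hc [g [Hg Hd]].
  destruct (continuity_ab_maj (fun x => Rabs (g x)) a b ltac:(lra)) as [xm [Hxm _]].
  { intros c _. apply (continuity_pt_comp g Rabs); [apply Hg | apply Rcontinuity_abs]. }
  exists (Rabs (g xm)). split; [apply Rabs_pos |].
  intros s t Hs Hst Ht.
  pose proof (derivative_bound_lipschitz f g a b 0 (Rabs (g xm)) (Rabs_pos _) Hc Hd
                ltac:(intros x Hx; rewrite Rminus_0_r; apply Hxm; lra) s t Hs Hst Ht) as H.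
  cbv beta in H. rewrite !Rmult_0_l, !Rminus_0_r in H. exact H.
Qed.

Lemma partition_le (p : nat -> R) (k : nat) :
  (forall i, (i < k)%nat -> p i < p (S i)) ->
  forall i j, (i <= j)%nat -> (j <= k)%nat -> p i <= p j.
Proof.
  intros Hinc i j Hij. induction Hij as [| j Hij IH]; intros Hj; [lra |].
  specialize (IH ltac:(lia)). specialize (Hinc j ltac:(lia)). lra.
Qed.

Lemma piecewise_C1_lipschitz (f : R -> R) (a b : R) :
  continuous_on_Icc f a b -> piecewise_C1 f a b -> exists L, 1 <= L /\ lipschitz_on f a b L.
Proof.
  intros Hc [k [p [Hp0 [Hpk [Hinc HC1]]]]].
  pose proof (partition_le p k Hinc) as Hmono.
  assert (Hpieces : forall j, (j <= k)%nat -> exists L, 1 <= L /\ lipschitz_on f a (p j) L).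
  { induction j as [| j IH]; intros Hj.
    - exists 1. split; [lra |]. intros s t Hs Hst Ht. rewrite Hp0 in Ht.
      replace t with s by lra. unfold Rminus. rewrite Rplus_opp_r, Rabs_R0. lra.
    - destruct (IH ltac:(lia)) as [L [HL Hf]].
      destruct (C1_on_Icc_lipschitz f (p j) (p (S j)) (Hinc j ltac:(lia))) as [K [HK Hfj]].
      { apply (continuous_on_Icc_subinterval f a b); [| | exact Hc].
        - rewrite <- Hp0. apply Hmono; lia.
        - rewrite <- Hpk. apply Hmono; lia. }
      { apply HC1. lia. }
      exists (Rmax L K). split; [pose proof (Rmax_l L K); lra |].
      apply (lipschitz_on_concat _ _ (p j)).
      + apply (lipschitz_on_mono _ _ _ L); [apply Rmax_l | exact Hf].
      + apply (lipschitz_on_mono _ _ _ K); [apply Rmax_r | exact Hfj]. }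
  rewrite <- Hpk. apply Hpieces. lia.
Qed.

Lemma piecewise_C1_right_slope (f : R -> R) (a b : R) :
  a < b -> continuous_on_Icc f a b -> piecewise_C1 f a b ->
  exists v, forall eps, 0 < eps -> exists d, 0 < d /\
    forall t, a <= t <= a + d -> Rabs (f t - f a - v * (t - a)) <= eps * (t - a).
Proof.
  intros Hab Hc [k [p [Hp0 [Hpk [Hinc HC1]]]]].
  assert (Hk : (0 < k)%nat) by (destruct k; [rewrite Hpk in Hp0; lra | lia]).
  destruct (HC1 0%nat Hk) as [g [Hg Hd]]. rewrite Hp0 in Hd.
  assert (Hp1 : a < p 1%nat) by (rewrite <- Hp0; apply Hinc; exact Hk).
  assert (Hp1b : p 1%nat <= b) by (rewrite <- Hpk; apply (partition_le p k Hinc); lia).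
  exists (g a). intros eps Heps.
  destruct (Hg a eps Heps) as [alp [Halp Hgc]].
  set (d := Rmin alp (p 1%nat - a)).
  assert (Hd_alp : d <= alp) by apply Rmin_l.
  assert (Hd_p1 : d <= p 1%nat - a) by apply Rmin_r.
  assert (Hd0 : 0 < d) by (apply Rmin_glb_lt; lra).
  exists d. split; [exact Hd0 |]. intros t Ht.
  assert (Hcd : continuous_on_Icc f a (a + d))
    by (apply (continuous_on_Icc_subinterval f a b); [lra | lra | exact Hc]).
  assert (Hgd : forall x, a < x < a + d -> Rabs (g x - g a) <= eps).
  { intros x Hx. apply Rlt_le, (Hgc x). split; [split; [exact I | lra] |].
    change (Rabs (x - a) < alp). rewrite Rabs_right; lra. }
  pose proof (derivative_bound_lipschitz f g a (a + d) (g a) eps ltac:(lra) Hcd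
                (fun x Hx => Hd x ltac:(lra)) Hgd a t ltac:(lra) ltac:(lra) ltac:(lra)) as H.
  replace (f t - f a - g a * (t - a)) with (f t - g a * t - (f a - g a * a)) by ring.
  exact H.
Qed.

Theorem proposition5p4 (T : R) (pi : R -> R) :
  0 < T ->
  continuous_on_Icc pi 0 T ->
  piecewise_C1 pi 0 T ->
  pi 0 = 0 ->
  exists n : nat, forall t, 0 <= t <= T ->
    C_aff (iterP n (fun s => (s, pi s)) t).
Proof.
  intros HT Hc Hpw Hpi0.
  destruct (piecewise_C1_lipschitz pi 0 T Hc Hpw) as [L [HL Hlip]].
  assert (Hadm : admissible T L pi) by exact (conj Hpi0 (lipschitz_on_slope_bounded pi T L Hlip)).
  destruct (piecewise_C1_right_slope pi 0 T HT Hc Hpw) as [v Hv].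
  destruct (cone_upto_near_0 pi T L HL Hadm v HT) as [k0 [sigma0 [Hs0 Hc0]]].
  { intros eps Heps. destruct (Hv eps Heps) as [d [Hd Hbound]].
    exists d. split; [exact Hd |]. intros s Hs.
    specialize (Hbound s ltac:(lra)). rewrite Hpi0, !Rminus_0_r in Hbound. exact Hbound. }
  destruct (cone_upto_height_T pi T L HL Hadm k0 sigma0 Hs0 Hc0) as [k Hk].
  exists k. intros t Ht. rewrite iterP_graph.
  exact (cone_upto_step k _ T Hk t Ht).
Qed.
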